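(* Let $S=S(\lambda_1,\ldots,\lambda_d)$ be a spider whose number of vertices $n=1+\lambda_1+\cdots+\lambda_d$ is even, and let $j$ be the number of legs of odd length (necessarily $j$ is odd). Then $$[e_{(2^{n/2})}]X_S=(-1)^{\frac{j-1}{2}}\cdot 2.$$
   Context: A spider $S(\lambda_1,\ldots,\lambda_d)$, for positive integers $\lambda_1,\ldots,\lambda_d$, is the tree consisting of a vertex $v$ (the center) together with $d$ vertex-disjoint paths (legs) having $\lambda_1,\ldots,\lambda_d$ vertices respectively, where $v$ is joined by an edge to one endpoint of each leg; the length of the $i$-th leg is $\lambda_i$. $(2^{k})$ is the partition with $k$ parts equal to $2$. The chromatic symmetric function of $G$ is $X_G=\sum_\kappa \prod_{v} x_{\kappa(v)}$ over proper colorings $\kappa$, and $[e_\mu]X_G$ denotes the coefficient of $e_\mu$ in the expansion of $X_G$ in elementary symmetric functions. *)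

From mathcomp Require Import all_boot all_algebra.
From mathcomp Require Import mpoly.
Set Implicit Arguments. Unset Strict Implicit. Unset Printing Implicit Defensive.
Import GRing.Theory.
Local Open Scope ring_scope.

Definition proper_coloring (V : finType) (adj : rel V) (N : nat)
    (kappa : {ffun V -> 'I_N}) : bool :=
  [forall x, forall y, adj x y ==> (kappa x != kappa y)].

Definition chrom_sym (V : finType) (adj : rel V) (N : nat) : {mpoly int[N]} :=
  \sum_(kappa : {ffun V -> 'I_N} | proper_coloring adj kappa)
     \prod_(v : V) 'X_(kappa v).

Definition is_partition_of (n : nat) (l : seq nat) : bool :=
  [&& sorted geq l, all (fun x => 0 < x)%N l & sumn l == n].

(* The (duplicate-free) list of all partitions of n: every partition of n has
   at most n parts, each at most n, so it arises from some n-tuple over 'I_(n+1)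
   after removing the zero entries. *)
Definition partitions_of (n : nat) : seq (seq nat) :=
  [seq l <- undup [seq [seq x <- map val (tval t) | (0 < x)%N]
                   | t <- enum {: n.-tuple 'I_n.+1}]
   | is_partition_of n l].

Definition elem_sym (N : nat) (l : seq nat) : {mpoly int[N]} :=
  \prod_(k <- l) mesym N int k.

Definition e_expansion (N n : nat) (f : {mpoly int[N]}) (c : seq nat -> int) : Prop :=
  f = \sum_(l <- partitions_of n) c l *: elem_sym N l.

(* S(lam_1,...,lam_d): vertices 0..n-1 with n = 1 + sum lam_i; vertex 0 is the
   center; leg i occupies the consecutive vertices
   1 + lam_1+...+lam_{i-1}, ..., lam_1+...+lam_i  (a path), and its first
   vertex (the "leg start") is joined to the center. *)
Definition spider_n (lam : seq nat) : nat := (1 + sumn lam)%N.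

Definition leg_start (lam : seq nat) (v : nat) : bool :=
  has (fun i => v == (1 + sumn (take i lam))%N) (iota 0 (size lam)).

Definition spider_adj (lam : seq nat) : rel 'I_(spider_n lam) :=
  fun x y =>
    [|| ((val x == 0%N) && leg_start lam (val y)),
        ((val y == 0%N) && leg_start lam (val x)),
        [&& val x != 0%N, val y == (val x).+1 & ~~ leg_start lam (val y)]
      | [&& val y != 0%N, val x == (val y).+1 & ~~ leg_start lam (val x)]].

(* X_S computed in n = |V(S)| variables (enough to determine the
   coefficients of all e_lambda with lambda |- n). *)
Definition spider_X (lam : seq nat) : {mpoly int[spider_n lam]} :=
  @chrom_sym _ (@spider_adj lam) (spider_n lam).

From mathcomp Require Import all_boot all_algebra.
From mathcomp Require Import mpoly.
From mathcomp Require Import fingroup perm.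
From mathcomp Require Import zify.
Import GRing.Theory.
Local Open Scope ring_scope.

(* Both sides of an e-expansion of X_S are evaluated at the point
   x = (-1, 1, 0, ..., 0) in n variables.
   - The coordinates of x are the roots of (X^2 - 1) X^(n-2), so at x we have
     e_0 = 1, e_2 = -1 and e_k = 0 for all other k; hence e_lambda(x) = 0 unless
     lambda = (2^(n/2)), and the expansion evaluates to c(2^(n/2)) (-1)^(n/2).
   - In X_S(x) only the colourings with colours {0, 1} survive.  A tree has
     exactly two such proper colourings, given by its bipartition (A, B), so
     X_S(x) = (-1)^|A| + (-1)^|B|.
   - For the spider, A is the set of vertices at even distance from the centre;
     counting leg by leg gives 2|A| + j = n + 1, and the sign equation
     (-1)^|A| + (-1)^|B| = c (-1)^(n/2) then determines c. *)

Lemma mem_le_sumn (l : seq nat) (x : nat) : x \in l -> (x <= sumn l)%N.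
Proof. by elim: l => [|y l IH] //=; rewrite inE => /orP[/eqP ->|/IH]; lia. Qed.

Lemma partition_range {n : nat} {l : seq nat} :
  is_partition_of n l -> all (fun x => 0 < x <= n)%N l.
Proof.
case/and3P=> _ /allP pos /eqP <-; apply/allP => x xl.
by rewrite pos //= mem_le_sumn.
Qed.

(* [partitions_of n] lists every partition of n exactly once: padding a
   partition with zeros gives an n-tuple over 'I_n.+1 from which it is
   recovered by erasing the zeros. *)
Lemma partitions_ofP (n : nat) (l : seq nat) :
  is_partition_of n l -> l \in partitions_of n.
Proof.
move=> pl; rewrite /partitions_of mem_filter pl mem_undup /=.
have /allP rng := partition_range pl.
have size_l : (size l <= n)%N.
  case/and3P: pl => _ pos /eqP <-; elim: l pos {rng} => //= x l IH /andP[x0 /IH].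
  lia.
pose padded := l ++ nseq (n - size l) 0%N.
have size_padded : size [seq inord x : 'I_n.+1 | x <- padded] == n.
  by rewrite size_map size_cat size_nseq subnKC.
apply/mapP; exists (Tuple size_padded); first by rewrite mem_enum.
rewrite /= -map_comp.
have -> : [seq val (inord x : 'I_n.+1) | x <- padded] = padded.
  rewrite -[RHS]map_id; apply/eq_in_map => x.
  rewrite mem_cat => /orP[/rng /andP[_ xn]|/nseqP[-> _]] /=; by rewrite inordK.
rewrite filter_cat (all_filterP (_ : all (fun x => 0 < x)%N l)); last by case/and3P: pl.
by elim: (n - size l)%N => [|k]; rewrite ?cats0.
Qed.

Lemma partitions_of_uniq (n : nat) : uniq (partitions_of n).
Proof. by rewrite filter_uniq // undup_uniq. Qed.

Section Multiplicities.
Variable n : nat.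
Local Notation S := [tuple mesym n int i.+1 | i < n].

Definition mult (l : seq nat) : 'X_{1..n} := [multinom count_mem i.+1 l | i < n].

Definition unmult (m : 'X_{1..n}) : seq nat :=
  flatten [seq nseq (m i) i.+1 | i <- enum 'I_n].

Lemma mem_unmult (m : 'X_{1..n}) (x : nat) : x \in unmult m -> (0 < x <= n)%N.
Proof. by case/flattenP=> _ /mapP[i _ ->] /nseqP[-> _]; rewrite ltn_ord. Qed.

Lemma count_unmult (m : 'X_{1..n}) (i : 'I_n) : count_mem i.+1 (unmult m) = m i.
Proof.
rewrite count_flatten -map_comp sumnE big_map big_enum /= (bigD1 i) //=.
rewrite count_nseq /= eqxx mul1n big1 ?addn0 // => j ji.
by rewrite count_nseq /= eqSS (inj_eq val_inj) (negbTE ji).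
Qed.

Lemma mult_unmult (m : 'X_{1..n}) : mult (unmult m) = m.
Proof. by apply/mnmP => i; rewrite mnmE count_unmult. Qed.

Lemma mult_perm {l1 l2 : seq nat} : perm_eq l1 l2 -> mult l1 = mult l2.
Proof. by move/seq.permP => e; apply/mnmP => i; rewrite !mnmE e. Qed.

Lemma perm_unmult_mult {l : seq nat} :
  all (fun x => 0 < x <= n)%N l -> perm_eq l (unmult (mult l)).
Proof.
move=> /allP rng; apply/allP => x; rewrite mem_cat => /orP xl.
have /andP[x0 xn] : (0 < x <= n)%N by case: xl => [/rng|/mem_unmult].
have xn' : (x.-1 < n)%N by lia.
have -> : x = (Ordinal xn').+1 by rewrite /=; lia.
by apply/eqP; rewrite count_unmult mnmE.
Qed.

Lemma elem_sym_mult {l : seq nat} :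
  all (fun x => 0 < x <= n)%N l -> elem_sym n l = 'X_[mult l] \mPo S.
Proof.
move=> /perm_unmult_mult pl; rewrite /elem_sym (perm_big _ pl) comp_mpolyX.
rewrite big_flatten big_map big_enum /=; apply: eq_bigr => i _.
by rewrite big_nseq iter_mulr_1 tnth_map tnth_ord_tuple.
Qed.

Lemma sumn_mult {l : seq nat} :
  all (fun x => 0 < x <= n)%N l -> sumn l = mnmwgt (mult l).
Proof.
move=> /perm_unmult_mult pl; rewrite (perm_sumn pl) sumn_flatten -map_comp.
rewrite sumnE big_map big_enum /mnmwgt; apply: eq_bigr => i _ /=.
by rewrite sumn_nseq mulnC.
Qed.

Definition partition_of_mult (m : 'X_{1..n}) : seq nat := sort geq (unmult m).

Lemma partition_of_multP (m : 'X_{1..n}) : mnmwgt m = n ->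
  is_partition_of n (partition_of_mult m) /\ mult (partition_of_mult m) = m.
Proof.
move=> wm; have ps : perm_eq (partition_of_mult m) (unmult m) by rewrite perm_sort.
have rng : all (fun x => 0 < x <= n)%N (partition_of_mult m).
  by apply/allP => x; rewrite (perm_mem ps) => /mem_unmult.
split; last by rewrite (mult_perm ps) mult_unmult.
apply/and3P; split.
- by apply: sort_sorted => x y; apply: leq_total.
- by apply/allP => x /(allP rng) /andP[].
- by rewrite (sumn_mult rng) (mult_perm ps) mult_unmult wm.
Qed.

Lemma mult_inj (l1 l2 : seq nat) : is_partition_of n l1 -> is_partition_of n l2 ->
  mult l1 = mult l2 -> l1 = l2.
Proof.
move=> p1 p2 e; have geq_anti : antisymmetric geq.
  by move=> x y le_xy; apply: anti_leq; rewrite andbC.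
apply: (sorted_eq (rev_trans leq_trans) geq_anti);
  [by case/and3P: p1 | by case/and3P: p2 |].
rewrite (permPl (perm_unmult_mult (partition_range p1))) e perm_sym.
exact: perm_unmult_mult (partition_range p2).
Qed.

End Multiplicities.

Lemma big_sum_superset (T : eqType) (R : nmodType) (s r : seq T) (F : T -> R) :
  uniq s -> uniq r -> {subset r <= s} -> (forall x, x \notin r -> F x = 0) ->
  \sum_(x <- s) F x = \sum_(x <- r) F x.
Proof.
move=> us ur rs F0; rewrite (bigID (mem r)) /= [X in _ + X]big1 ?addr0 //.
rewrite -big_filter; apply/perm_big/uniq_perm; rewrite ?filter_uniq // => x.
by rewrite mem_filter; apply/andP/idP => [[]//|xr]; split; last exact: rs.
Qed.

Theorem e_expansion_exists (n : nat) (p : {mpoly int[n]}) :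
  p \is symmetric -> p \is n.-homog -> exists c, e_expansion n p c.
Proof.
move=> p_sym p_homog; have [t [tSp t_homog]] := sym_fundamental_homog p_sym p_homog.
exists (fun l => t@_(mult n l)); rewrite /e_expansion -tSp comp_mpolyEX.
transitivity (\sum_(m <- map (mult n) (partitions_of n))
                t@_m *: ('X_[m] \mPo [tuple mesym n int i.+1 | i < n])).
  symmetry; apply: big_sum_superset.
  - rewrite map_inj_in_uniq ?partitions_of_uniq // => l1 l2.
    by rewrite !mem_filter => /andP[p1 _] /andP[p2 _]; apply: mult_inj.
  - exact: msupp_uniq.
  - move=> m /(dhomogP _ _ _ t_homog) /partition_of_multP[pl ml].
    by apply/mapP; exists (partition_of_mult n m); rewrite ?partitions_ofP.
  - by move=> m /memN_msupp_eq0 ->; rewrite scale0r.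
rewrite big_map big_seq [RHS]big_seq; apply: eq_bigr => l.
by rewrite mem_filter => /andP[pl _]; rewrite elem_sym_mult ?(partition_range pl).
Qed.

Lemma chrom_sym_homog (V : finType) (adj : rel V) (N : nat) :
  chrom_sym adj N \is #|V|.-homog.
Proof.
apply: rpred_sum => k _; have -> : #|V| = (\sum_(v : V) 1)%N by rewrite sum1_card.
apply: (big_ind2 (fun p d => p \is d.-homog)) => [|p d q e|v _].
- exact: dhomog1.
- exact: dhomogM.
- by rewrite dhomogX; apply/eqP; apply: mdeg1.
Qed.

(* X_G is symmetric: permuting the variables permutes the proper colourings. *)
Lemma chrom_sym_symmetric (V : finType) (adj : rel V) (N : nat) :
  chrom_sym adj N \is symmetric.
Proof.
apply/issymP => s; rewrite /chrom_sym raddf_sum /=.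
have msymXi (i : 'I_N) : msym s ('X_i : {mpoly int[N]}) = 'X_(s i).
  by rewrite msymX; congr 'X_[_]; apply/mnmP => j; rewrite !mnmE (canF_eq (permK s)).
under eq_bigr => k _ do rewrite rmorph_prod (eq_bigr _ (fun v _ => msymXi (k v))).
pose relabel (k : {ffun V -> 'I_N}) : {ffun V -> 'I_N} := [ffun v => s (k v)].
have relabel_bij : bijective relabel.
  exists (fun k : {ffun V -> 'I_N} => [ffun v => (s^-1)%g (k v)]) => k;
    by apply/ffunP => v; rewrite !ffunE ?permK ?permKV.
rewrite [RHS](reindex relabel); last exact: onW_bij.
apply: eq_big => k; last by move=> _; apply: eq_bigr => v _; rewrite ffunE.
apply/forallP/forallP => proper_k x; apply/forallP => y;
  move/forallP: (proper_k x) => /(_ y); by rewrite !ffunE (inj_eq perm_inj).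
Qed.

Lemma bit_lt2 (b : bool) : (b < 2)%N.
Proof. by case: b. Qed.

Section EvaluationPoint.
Variable N : nat.
Hypothesis N_gt1 : (1 < N)%N.

Definition evalseq : seq int := [:: -1; 1] ++ nseq (N - 2) 0.
Definition evalpt (i : 'I_N) : int := nth 0 evalseq i.

Lemma size_evalseq : size evalseq == N.
Proof. by rewrite size_cat size_nseq /=; apply/eqP; lia. Qed.

Lemma evalpt_ge2 (i : 'I_N) : (1 < i)%N -> evalpt i = 0.
Proof. by move=> i_gt1; rewrite /evalpt nth_cat /= ltnNge i_gt1 nth_nseq if_same. Qed.

Lemma prod_roots_evalseq :
  \prod_(c <- evalseq) ('X - c%:P) = ('X^2 - 1) * 'X^(N - 2) :> {poly int}.
Proof.
rewrite big_cat /= !big_cons big_nil mulr1 big_nseq subr0 iter_mulr_1.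
by congr (_ * _); rewrite polyCN opprK polyC1 mulrC -subr_sqr expr1n.
Qed.

(* Value of e_k at the point: e_0 = 1, e_2 = -1, every other e_k vanishes.
   By Vieta, e_k is (-1)^k times a coefficient of ('X^2 - 1) * 'X^(N - 2). *)
Definition esign (k : nat) : int := if k == 0%N then 1 else if k == 2%N then -1 else 0.

Lemma meval_mesym (k : nat) : (mesym N int k).@[evalpt] = esign k.
Proof.
case: (leqP k N) => kN; last first.
  rewrite mesym_geqnE // meval0 /esign.
  by case: eqP => [k0|_]; [lia | case: eqP => //; lia].
pose cs : N.-tuple int := Tuple size_evalseq.
have -> : (mesym N int k).@[evalpt] = (mesym N int k).@[tnth cs].
  by apply: meval_eq => i; rewrite (tnth_nth 0).
have := mroots_coeff cs (Ordinal (kN : (k < N.+1)%N)).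
rewrite /= prod_roots_evalseq coefMXn => /(congr1 ( *%R ((-1) ^+ k))).
rewrite signrMK => <-; case: (ltnP 2 k) => k2.
  rewrite ifT ?mulr0; last by lia.
  by rewrite /esign; case: eqP => [|_]; [lia | case: eqP => //; lia].
rewrite ifF; last by apply/negbTE; rewrite -leqNgt; lia.
rewrite (_ : N - k - (N - 2) = 2 - k)%N; last by lia.
case: k {kN} k2 => [|[|[|]]] //= _; rewrite coefB coefXn coefC //=.
Qed.

Lemma meval_elem_sym (l : seq nat) : all (fun x => 0 < x)%N l ->
  (elem_sym N l).@[evalpt] = if all (pred1 2%N) l then (-1) ^+ size l else 0.
Proof.
elim: l => [|x l IH] /=; first by rewrite /elem_sym big_nil meval1.
case/andP=> x0 /IH; rewrite /elem_sym big_cons mevalM meval_mesym => ->.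
case: x x0 => [|[|[|x]]] //= _; rewrite /esign /= ?mul0r //.
by case: (all _ _); rewrite ?mulr0 // exprS.
Qed.

Lemma nseq2_partition : ~~ odd N -> is_partition_of N (nseq N./2 2%N).
Proof.
move=> N_even; apply/and3P; split.
- by elim: N./2 => [|[|m]].
- by apply/allP => x /nseqP[->].
- by rewrite sumn_nseq; apply/eqP; move: (odd_double_half N); rewrite (negbTE N_even); lia.
Qed.

Lemma meval_e_expansion {f : {mpoly int[N]}} {c : seq nat -> int} :
  ~~ odd N -> e_expansion N f c -> f.@[evalpt] = c (nseq N./2 2%N) * (-1) ^+ N./2.
Proof.
move=> N_even ->; rewrite raddf_sum /= big_seq.
under eq_bigr => l l_part.
  have /and3P[_ l_pos /eqP l_sum] : is_partition_of N l.
    by move: l_part; rewrite mem_filter => /andP[].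
  rewrite mevalZ meval_elem_sym //.
  have -> : all (pred1 2%N) l = (l == nseq N./2 2%N).
    apply/all_pred1P/eqP => [l2|->]; last by rewrite size_nseq.
    by rewrite l2; congr nseq; rewrite -l_sum l2 size_nseq sumn_nseq mul2n doubleK.
  over.
rewrite -big_seq (bigD1_seq (nseq N./2 2%N)) ?partitions_of_uniq //=; last first.
  by rewrite partitions_ofP ?nseq2_partition.
rewrite eqxx size_nseq big1 ?addr0 // => l /negbTE ->; exact: mulr0.
Qed.

Section TwoColourings.
Variables (V : finType) (adj : rel V) (side : V -> bool).
Hypothesis V_nonempty : (0 < #|V|)%N.
Hypothesis side_adj : forall x y, adj x y -> side x != side y.
Hypothesis side_unique : forall k : {ffun V -> 'I_N}, proper_coloring adj k ->
  (forall v, val (k v) < 2)%N -> exists b, forall v, val (k v) = b (+) side v.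

Definition side_colouring (b : bool) : {ffun V -> 'I_N} :=
  [ffun v => Ordinal (leq_trans (bit_lt2 (b (+) side v)) N_gt1)].

Lemma side_colouring_proper (b : bool) : proper_coloring adj (side_colouring b).
Proof.
apply/forallP => x; apply/forallP => y; apply/implyP => /side_adj.
apply: contra => /eqP/(congr1 val); rewrite !ffunE /= => /eqP.
by case: b; case: (side x); case: (side y).
Qed.

Lemma side_colourings_differ : side_colouring false != side_colouring true.
Proof.
have [v _] := card_gt0P V_nonempty.
by apply/eqP => /ffunP/(_ v)/(congr1 val); rewrite !ffunE /=; case: (side v).
Qed.

Lemma prod_sign (P : pred V) :
  \prod_(v : V) (if P v then 1 else -1 : int) = (-1) ^+ #|[pred v | ~~ P v]|.
Proof.
rewrite (bigID P) /= big1 ?mul1r => [|v ->] //; rewrite -prodr_const.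
by apply: eq_big => // v /negbTE ->.
Qed.

(* At the point, X_G is the signed count of its proper {0, 1}-colourings:
   colour 0 contributes -1, colour 1 contributes 1, larger colours 0. *)
Lemma meval_chrom_sym : (chrom_sym adj N).@[evalpt]
  = (-1) ^+ #|[pred v | ~~ side v]| + (-1) ^+ #|[pred v | side v]|.
Proof.
rewrite /chrom_sym raddf_sum /=.
rewrite (eq_bigr (fun k : {ffun V -> 'I_N} => \prod_(v : V) evalpt (k v))); last first.
  by move=> k _; rewrite rmorph_prod; apply: eq_bigr => v _; apply: mevalXU.
rewrite (bigD1 (side_colouring false)) ?side_colouring_proper //=.
rewrite (bigD1 (side_colouring true)) /= ?side_colouring_proper //; last first.
  by rewrite eq_sym side_colourings_differ.
rewrite [X in _ + (_ + X)]big1 ?addr0 => [|k /andP[/andP[proper_k k_ne0] k_ne1]].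
  have colour b v : evalpt (side_colouring b v) = if b (+) side v then 1 else -1.
    by rewrite ffunE /evalpt /=; case: (_ (+) _).
  under eq_bigr do rewrite colour.
  under [X in _ + X]eq_bigr do rewrite colour.
  by rewrite !prod_sign; congr (_ + _ ^+ _); apply: eq_card => v; rewrite !inE negbK.
have [k2|] := boolP [forall v, val (k v) < 2]%N.
  have [b kb] := side_unique _ proper_k (forallP k2).
  suff /eqP : k = side_colouring b.
    by case: b {kb}; [move: k_ne1 | move: k_ne0]; move=> /negbTE ->.
  by apply/ffunP => v; apply: val_inj; rewrite kb ffunE.
case/forallPn => v; rewrite -leqNgt => k_ge2.
by apply/eqP/prodf_eq0; exists v => //; rewrite evalpt_ge2.
Qed.

End TwoColourings.
End EvaluationPoint.

Section Spider.
Local Open Scope nat_scope.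
Variable lam : seq nat.
Local Notation N := (spider_n lam).

Definition leg_first (i : nat) : nat := 1 + sumn (take i lam).

(* [odd_level v] says that vertex v is at odd distance from the centre 0:
   along a leg the parity alternates, and a leg's first vertex is a
   neighbour of the centre. *)
Fixpoint odd_level (v : nat) : bool :=
  if v is u.+1 then leg_start lam u.+1 || ~~ odd_level u else false.

Lemma odd_levelS (v : nat) : odd_level v.+1 = leg_start lam v.+1 || ~~ odd_level v.
Proof. by []. Qed.

Lemma leg_start_gt0 (v : nat) : leg_start lam v -> 0 < v.
Proof. by case/hasP => i _ /eqP ->. Qed.

Lemma leg_start_first (i : nat) : i < size lam -> leg_start lam (leg_first i).
Proof. by move=> i_lt; apply/hasP; exists i; rewrite ?mem_iota. Qed.

Lemma leg_first_mono {i j : nat} : i <= j -> leg_first i <= leg_first j.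
Proof. by move=> le_ij; rewrite leq_add2l -(subnKC le_ij) takeD sumn_cat leq_addr. Qed.

Lemma leg_firstS (i : nat) : i < size lam -> leg_first i.+1 = leg_first i + nth 0 lam i.
Proof. by move=> i_lt; rewrite /leg_first (take_nth 0 i_lt) -cats1 sumn_cat /= addn0 addnA. Qed.

Lemma leg_first_size : leg_first (size lam) = N.
Proof. by rewrite /leg_first take_size. Qed.

Lemma leg_interior {i t : nat} : i < size lam -> 0 < t < nth 0 lam i ->
  ~~ leg_start lam (leg_first i + t).
Proof.
move=> i_lt t_in; apply/hasP => -[i' _ /eqP first_i'].
have [le_i'i|lt_ii'] := leqP i' i.
  by have := leg_first_mono le_i'i; rewrite /leg_first in first_i' *; lia.
have := leg_first_mono lt_ii'; rewrite leg_firstS // /leg_first in first_i' *; lia.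
Qed.

Lemma odd_level_leg (i t : nat) : i < size lam -> t < nth 0 lam i ->
  odd_level (leg_first i + t) = ~~ odd t.
Proof.
move=> i_lt; elim: t => [|t IH] t_lt.
  by rewrite addn0 /leg_first add1n /= -/(leg_first i) leg_start_first.
have t_in : 0 < t.+1 < nth 0 lam i by rewrite t_lt.
by rewrite addnS odd_levelS -addnS (negbTE (leg_interior i_lt t_in)) IH // ltnW.
Qed.

Lemma count_odd_iota (L : nat) : count odd (iota 0 L) = L./2.
Proof.
elim: L => [|L IH] //; rewrite -addn1 iotaD count_cat IH /= addn0 add0n.
by rewrite -[in RHS](odd_double_half L) addn1 /=; case: (odd L) => /=; lia.
Qed.

(* Counting the even-level vertices leg by leg: a leg of length l has
   l./2 even-level vertices, so twice their number plus the number of odd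
   legs is the number of vertices plus one (the centre). *)
Lemma even_level_count (i : nat) : i <= size lam ->
  2 * count (predC odd_level) (iota 0 (leg_first i)) + count odd (take i lam)
  = leg_first i + 1.
Proof.
elim: i => [|i IH] i_le; first by rewrite /leg_first take0.
have i_lt : i < size lam by [].
rewrite leg_firstS // iotaD count_cat (take_nth 0 i_lt) -cats1 count_cat.
have -> : iota (leg_first i) (nth 0 lam i) = map (addn (leg_first i)) (iota 0 (nth 0 lam i)).
  by rewrite -iotaDl addn0.
have leg_count : count (preim (addn (leg_first i)) (predC odd_level)) (iota 0 (nth 0 lam i))
    = (nth 0 lam i)./2.
  rewrite -count_odd_iota; apply: eq_in_count => t; rewrite mem_iota add0n => /andP[_ t_lt].
  by change (~~ odd_level (leg_first i + t) = odd t); rewrite odd_level_leg // negbK.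
rewrite count_map leg_count.
move: (IH (ltnW i_le)) (odd_double_half (nth 0 lam i)); rewrite /leg_first /=.
by case: (odd _) => /=; lia.
Qed.

Lemma odd_level_adj (x y : 'I_N) : @spider_adj lam x y -> odd_level x != odd_level y.
Proof.
have first_odd v : leg_start lam v -> odd_level v.
  by case: v => [/leg_start_gt0 //|v] /= ->.
rewrite /spider_adj /=.
case/or4P => [/andP[/eqP-> /first_odd->] // | /andP[/eqP-> /first_odd->] //
  | /and3P[_ /eqP-> /negbTE ls] | /and3P[_ /eqP-> /negbTE ls]];
  by rewrite odd_levelS ls /=; case: (odd_level _).
Qed.

(* The spider is connected, so a proper {0, 1}-colouring is determined by
   the colour of the centre: every vertex v > 0 is adjacent to the centre
   or to v - 1. *)
Lemma spider_two_colourings (k : {ffun 'I_N -> 'I_N}) : 0 < size lam ->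
  proper_coloring (@spider_adj lam) k -> (forall v, val (k v) < 2) ->
  exists b, forall v, val (k v) = b (+) odd_level v.
Proof.
move=> lam_ne proper_k k_lt2; pose centre : 'I_N := ord0.
have flip x y (b : bool) : @spider_adj lam x y -> val (k x) = b -> val (k y) = ~~ b.
  move=> adj_xy kx; have := k_lt2 y; move/forallP: proper_k => /(_ x)/forallP/(_ y).
  rewrite adj_xy /= -(inj_eq val_inj) kx /=.
  by case: (nat_of_ord (k y)) => [|[|]] //; case: b {kx}.
exists (val (k centre) == 1); suff colour_v v (v_lt : v < N) :
    val (k (Ordinal v_lt)) = (val (k centre) == 1) (+) odd_level v.
  by case=> v v_lt; apply: colour_v.
elim: v v_lt => [|v IH] v_lt.
  have -> : Ordinal v_lt = centre by apply: val_inj.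
  by rewrite addbF; move: (k_lt2 centre) => /=; case: (nat_of_ord (k centre)) => [|[|]].
have v_lt' : v < N by apply: ltnW.
case ls : (leg_start lam v.+1).
  rewrite odd_levelS ls addbT; apply: (flip centre); first by rewrite /spider_adj /= ls.
  by have := k_lt2 centre; case: (val (k centre)) => [|[|]].
rewrite odd_levelS ls /= addbN; apply: (flip (Ordinal v_lt')); last exact: IH.
rewrite /spider_adj /= ls eqxx andbT andbF /=.
case: v {IH v_lt v_lt'} ls => // /negbT; suff -> : leg_start lam 1 by [].
by apply/hasP; exists 0; rewrite ?mem_iota //= take0.
Qed.

End Spider.

Lemma card_ord_count (P : pred nat) (n : nat) :
  #|[pred i : 'I_n | P i]| = count P (iota 0 n).
Proof.
rewrite -sum1_card -sum1_count -(big_mkord P (fun _ => 1%N)).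
by rewrite /index_iota subn0.
Qed.

(* The final sign bookkeeping: with N = 2h even, 2a + j = N + 1 and
   a + b = N, we get j = 2q + 1, b = a + 2q, h = a + q, and then
   (-1)^a + (-1)^b = 2 (-1)^a = c (-1)^h forces c = 2 (-1)^q. *)
Lemma sign_identity (c : int) (a b j N : nat) : ~~ odd N ->
  (2 * a + j = N + 1)%N -> (a + b = N)%N ->
  (-1) ^+ a + (-1) ^+ b = c * (-1) ^+ N./2 -> c = (-1) ^+ j.-1./2 * 2.
Proof.
move=> N_even count_a sum_ab; have N_half := odd_double_half N.
have j_odd : odd j.
  by move: (congr1 odd count_a); rewrite !oddD (negbTE N_even); case: (odd a); case: (odd j).
have j_eq : j = (j./2).*2.+1 by move: (odd_double_half j); rewrite j_odd; lia.
rewrite (negbTE N_even) in N_half; rewrite {1}j_eq /= doubleK.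
rewrite (_ : b = a + (j./2).*2)%N; last by lia.
rewrite (_ : N./2 = a + j./2)%N; last by lia.
rewrite !exprD -[(-1) ^+ (j./2).*2]signr_odd odd_double expr0 mulr1.
rewrite -(signr_odd _ a) -(signr_odd _ j./2).
by case: (odd a); case: (odd j./2); rewrite ?expr0 ?expr1; lia.
Qed.

Theorem lemma5p2 (lam : seq nat) :
  all (fun x => 0 < x)%N lam ->
  ~~ odd (spider_n lam) ->
  (exists c : seq nat -> int, e_expansion (spider_n lam) (spider_X lam) c) /\
  (forall c : seq nat -> int,
      e_expansion (spider_n lam) (spider_X lam) c ->
      c (nseq (spider_n lam)./2 2%N)
        = (-1) ^+ (count odd lam).-1./2 * 2).
Proof.
move=> lam_pos N_even; have lam_ne : (0 < size lam)%N by move: N_even; case: (lam).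
have N_gt1 : (1 < spider_n lam)%N.
  by move: lam_pos lam_ne; rewrite /spider_n; case: (lam) => [|x l] //= /andP[x0 _] _; lia.
split.
  apply: e_expansion_exists; first exact: chrom_sym_symmetric.
  by rewrite -[X in X.-homog]card_ord; apply: chrom_sym_homog.
move=> c c_exp; have := meval_e_expansion _ N_gt1 N_even c_exp.
have centre_exists : (0 < #|'I_(spider_n lam)|)%N by rewrite card_ord ltnW.
rewrite /spider_X (meval_chrom_sym _ N_gt1 _ _ _ centre_exists (@odd_level_adj lam)
  (fun k => @spider_two_colourings lam k lam_ne)).
rewrite (card_ord_count (predC (odd_level lam))) card_ord_count.
apply: sign_identity => //; last by rewrite addnC count_predC size_iota.
have := @even_level_count lam _ (leqnn (size lam)).
by rewrite leg_first_size take_size addnC.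
Qed.
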